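(* Let $\lambda\ge\kappa$ be uncountable cardinals and $p\in(1,\infty)$. Let $(x_\alpha)_{\alpha<\kappa}$ be a normalised transfinite sequence in $\ell_p(\lambda)$ equivalent to the standard unit vector basis of $\ell_p(\kappa)$. If $T\in\mathscr{B}(\ell_p(\lambda))$ satisfies $\inf\{\|Tx_\alpha\|:\alpha<\kappa\}>0$, then $T\notin\mathscr{S}_{\ell_p(\kappa)}(\ell_p(\lambda))$.
   Context: $(x_\alpha)$ is equivalent to the unit vector basis $(e_\alpha)$ of $\ell_p(\kappa)$ if $e_\alpha\mapsto x_\alpha$ extends to an isomorphism of $\ell_p(\kappa)$ onto $\overline{\operatorname{span}}\{x_\alpha\}$. For Banach spaces $X,Z$, $\mathscr{S}_Z(X)$ is the set of $T\in\mathscr{B}(X)$ such that there is no closed subspace $W\subseteq X$ isomorphic to $Z$ with $T|_W$ bounded below. *)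

From HB Require Import structures.
From mathcomp Require Import all_boot all_order all_algebra.
From mathcomp Require Import all_classical all_reals all_analysis.
Set Implicit Arguments. Unset Strict Implicit. Unset Printing Implicit Defensive.
Import Order.TTheory GRing.Theory Num.Theory.
Local Open Scope classical_set_scope.
Local Open Scope ring_scope.

Section Lp.
Variable R : realType.

Definition lp_sum (I : choiceType) (p : R) (f : I -> R) : \bar R :=
  \esum_(i in [set: I]) (`|f i| `^ p)%:E.

Definition in_lp (I : choiceType) (p : R) (f : I -> R) : Prop :=
  (lp_sum p f < +oo)%E.

Definition lp_norm (I : choiceType) (p : R) (f : I -> R) : R :=
  (fine (lp_sum p f)) `^ p^-1.

Definition unit_vec (I : choiceType) (a : I) : I -> R := fun i => (i == a)%:R.

Definition lp_linear (I J : choiceType) (p : R) (T : (I -> R) -> (J -> R)) :=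
  forall (f g : I -> R) (a : R), in_lp p f -> in_lp p g ->
    T (fun i => a * f i + g i) = (fun j => a * T f j + T g j).

Definition bounded_op (I J : choiceType) (p : R) (T : (I -> R) -> (J -> R)) :=
  [/\ lp_linear p T,
      (forall f, in_lp p f -> in_lp p (T f)) &
      exists C : R, 0 <= C /\ forall f, in_lp p f -> lp_norm p (T f) <= C * lp_norm p f].

Definition bounded_below_on (I J : choiceType) (p : R)
    (T : (I -> R) -> (J -> R)) (W : set (I -> R)) :=
  exists c : R, 0 < c /\ forall f, W f -> c * lp_norm p f <= lp_norm p (T f).

Definition lp_subspace (I : choiceType) (p : R) (W : set (I -> R)) :=
  [/\ W `<=` in_lp p, W (fun=> 0) &
      forall f g (a : R), W f -> W g -> W (fun i => a * f i + g i)].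

Definition lp_closed (I : choiceType) (p : R) (W : set (I -> R)) :=
  forall f, in_lp p f ->
    (forall e : R, 0 < e -> exists g, W g /\ lp_norm p (fun i => f i - g i) < e) ->
    W f.

Definition lp_iso_onto (K L : choiceType) (p : R)
    (J : (K -> R) -> (L -> R)) (W : set (L -> R)) :=
  [/\ bounded_op p J, bounded_below_on p J (in_lp p) &
      forall g, W g <-> exists f, in_lp p f /\ J f = g].

Definition closed_span (K L : choiceType) (p : R) (x : K -> L -> R) : set (L -> R) :=
  fun f => in_lp p f /\
    forall e : R, 0 < e -> exists (s : seq K) (c : K -> R),
      lp_norm p (fun i => f i - \sum_(a <- s) c a * x a i) < e.

Definition equiv_unit_basis (K L : choiceType) (p : R) (x : K -> L -> R) :=
  exists J : (K -> R) -> (L -> R),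
    lp_iso_onto p J (closed_span p x) /\ forall a, J (unit_vec a) = x a.

Definition in_S_lp (K L : choiceType) (p : R) (T : (L -> R) -> (L -> R)) :=
  bounded_op p T /\
  ~ exists W : set (L -> R),
      [/\ lp_subspace p W, lp_closed p W,
          (exists J : (K -> R) -> (L -> R), lp_iso_onto p J W) &
          bounded_below_on p T W].

End Lp.

From HB Require Import structures.
From mathcomp Require Import all_boot all_order all_algebra.
From mathcomp Require Import all_classical all_reals all_analysis.
From mathcomp Require Import ring.
Import Order.TTheory GRing.Theory Num.Theory.
Local Open Scope classical_set_scope.
Local Open Scope ring_scope.
Set Implicit Arguments. Unset Strict Implicit. Unset Printing Implicit Defensive.

(* Let J : l_p(K) -> l_p(L) realise the equivalence of (x_a) with the unit
   vector basis and put y_a := T x_a, so that ||y_a|| >= c > 0.  We find an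
   injection iota : K -> K such that the y_(iota k) have pairwise disjoint
   supports; then T is bounded below by c on the span of the e_(iota k) and
   W := J(zero extensions along iota of l_p(K)) is a closed subspace
   isomorphic to l_p(K) on which T is bounded below.
   - Set theory: an infinite set A satisfies |A * nat| <= |A| (Zorn), hence
     an uncountable set with a symmetric relation having countable
     neighbourhoods injects into an independent subset of itself.
   - l_p basics for an arbitrary index type, using only the quasi-triangle
     inequality |x + y|^p <= 2^p (|x|^p + |y|^p).
   - Countability: elements of l_p have countable support and, for p > 1,
     bounded operators have countably supported rows, so "y_a and y_b have
     overlapping supports" has countable neighbourhoods.
   - Operators mapping unit vectors to disjointly supported vectors of norm
     >= c are bounded below by c; zero extension along an injection is an
     isometry, and composing it with J gives an isomorphism onto a closed
     subspace. *)

Lemma infinite_injective_seq (T : Type) (B : set T) : infinite_set B ->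
  exists h : nat -> T, (forall n, B (h n)) /\ injective h.
Proof.
move/infiniteP/card_leP => -[f].
exists (fun n => val (f (SigSub (mem_set (I : [set: nat] n))))); split.
  by move=> n; exact: set_valP.
move=> n m /val_inj /(@inj _ _ _ f) H.
by have := H (mem_set I) (mem_set I) => /(congr1 val).
Qed.

Section ProdNat.
Variables (T : Type) (A : set T).

(* A pairing graph is the graph of an injection g : D * nat -> D, for some
   D included in A (its domain, see graph_dom below); a maximal one will
   witness |A * nat| <= |A|. *)
Definition pairing_graph (G : set (T * nat * T)) :=
  [/\ (forall a n y, G (a, n, y) -> A a),
      (forall a n y z, G (a, n, y) -> G (a, n, z) -> y = z),
      (forall a n y, G (a, n, y) -> forall m, exists z, G (a, m, z)),
      (forall a n y, G (a, n, y) -> exists m z, G (y, m, z))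
    & (forall a n y b m, G (a, n, y) -> G (b, m, y) -> a = b /\ n = m)].

Definition graph_dom (G : set (T * nat * T)) : set T :=
  [set a | exists n y, G (a, n, y)].

Lemma pairing_graph_chain (F : set (set (T * nat * T))) :
  F `<=` pairing_graph -> total_on F subset ->
  pairing_graph (\bigcup_(X in F) X).
Proof.
move=> FG Ftot.
have common X Y : F X -> F Y -> exists2 Z, F Z & X `<=` Z /\ Y `<=` Z.
  move=> FX FY; have [XY|YX] := Ftot _ _ FX FY; [exists Y|exists X] => //.
    by split=> // t.
  by split=> // t.
split.
- by move=> a n y [X FX Xa]; have [h _ _ _ _] := FG _ FX; exact: h Xa.
- move=> a n y z [X FX Xy] [Y FY Yz]; have [Z FZ [XZ YZ]] := common _ _ FX FY.
  by have [_ h _ _ _] := FG _ FZ; apply: h (XZ _ Xy) (YZ _ Yz).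
- move=> a n y [X FX Xy] m; have [_ _ h _ _] := FG _ FX.
  by have [z Xz] := h _ _ _ Xy m; exists z, X.
- move=> a n y [X FX Xy]; have [_ _ _ h _] := FG _ FX.
  by have [m [z Xz]] := h _ _ _ Xy; exists m, z, X.
- move=> a n y b m [X FX Xy] [Y FY Yz]; have [Z FZ [XZ YZ]] := common _ _ FX FY.
  by have [_ _ _ _ h] := FG _ FZ; apply: h (XZ _ Xy) (YZ _ Yz).
Qed.

(* A maximal pairing graph leaves only finitely many points of A outside its
   domain: from an injective sequence h of such points one could add the
   chains (h i, n) |-> h (pr (i, n)). *)
Lemma maximal_pairing_graph_cofinite (G : set (T * nat * T)) :
  pairing_graph G -> (forall G', G `<` G' -> ~ pairing_graph G') ->
  finite_set (A `\` graph_dom G).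
Proof.
move=> [G1 G2 G3 G4 G5] Gmax.
have /countable_injP[pr prI] : countable [set: nat * nat] by [].
have {}prI : injective pr by move=> u v /prI; apply; rewrite inE.
apply: contrapT => /infinite_injective_seq [h [hAD hI]].
have hA i : A (h i) by case: (hAD i).
have hnD i : ~ graph_dom G (h i) by case: (hAD i).
have valD a n y : G (a, n, y) -> graph_dom G y by move=> /G4.
pose H := [set t | exists i n, t = (h i, n, h (pr (i, n)))].
apply: (Gmax (G `|` H)).
  split; first by move=> t Gt; left.
  apply/existsNP; exists (h 0, 0, h (pr (0, 0)))%N => /(_ (or_intror _)) GH.
  by apply: (hnD 0%N); exists 0%N, (h (pr (0, 0)%N)); apply: GH; exists 0%N, 0%N.
split.
- by move=> a n y [/G1 //|[i [m [-> _ _]]]].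
- move=> a n y z [Gy|[i [m [-> -> ->]]]] [Gz|[j [k [ea en ez]]]].
  + exact: G2 Gy Gz.
  + by exfalso; apply: (hnD j); rewrite -ea; exists n, y.
  + by exfalso; apply: (hnD i); exists m, z.
  + by move: ea => /hI ea; rewrite ez -en -ea.
- move=> a n y [Gy|[i [m [-> _ _]]]] k.
    by have [z Gz] := G3 _ _ _ Gy k; exists z; left.
  by exists (h (pr (i, k))); right; exists i, k.
- move=> a n y [Gy|[i [m [_ _ ->]]]].
    by have [k [z Gz]] := G4 _ _ _ Gy; exists k, z; left.
  by exists 0%N, (h (pr (pr (i, m), 0%N))); right; exists (pr (i, m)), 0%N.
- move=> a n y b m [Gy|[i [k [ea en ey]]]] [Gz|[j [l [eb em ez]]]].
  + exact: G5 Gy Gz.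
  + by exfalso; apply: (hnD (pr (j, l))); rewrite -ez; apply: valD Gy.
  + by exfalso; apply: (hnD (pr (i, k))); rewrite -ey; apply: valD Gz.
  + by move: ey; rewrite ez => /hI /prI [ij kl]; subst.
Qed.

Lemma infinite_prod_nat_injection : infinite_set A ->
  exists f : T -> nat -> T, (forall a n, A a -> A (f a n)) /\
    (forall a n b m, A a -> A b -> f a n = f b m -> a = b /\ n = m).
Proof.
move=> Ainf.
have [G [Ggood Gmax]] := Zorn_bigcup pairing_graph_chain.
have [G1 G2 G3 G4 G5] := Ggood.
have /countable_injP[pr prI] : countable [set: nat * nat] by [].
have {}prI : injective pr by move=> u v /prI; apply; rewrite inE.
set D := graph_dom G.
have finAD := maximal_pairing_graph_cofinite Ggood Gmax.
have DA : D `<=` A by move=> a [n [y /G1]].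
have [d0 Dd0] : D !=set0.
  apply: infinite_setN0 => finD; apply: Ainf.
  apply: (sub_finite_set (B := D `|` (A `\` D))); last by rewrite finite_setU.
  by move=> a Aa; case: (pselect (D a)) => Da; [left|right].
have /countable_injP [fin finI] := finite_set_countable finAD.
have [gf gfP] : exists gf : T -> nat -> T, forall a n, D a -> G (a, n, gf a n).
  have chain_from (an : T * nat) : exists y, D an.1 -> G (an.1, an.2, y).
    case: an => a n /=; case: (pselect (D a)) => [[m [y Gy]]|nDa]; last by exists d0.
    by have [z Gz] := G3 _ _ _ Gy n; exists z.
  have [g gP] := choice chain_from.
  by exists (fun a n => g (a, n)) => a n Da; exact: (gP (a, n) Da).
(* points of D use their own chain; the finitely many others share d0's *)
pose e a := if pselect (D a) then (a, 0%N) else (d0, (fin a).+1).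
have eD a : D (e a).1 by rewrite /e; case: pselect.
exists (fun a n => gf (e a).1 (pr ((e a).2, n))); split.
  move=> a n _; apply: DA.
  by have [m [z Gz]] := G4 _ _ _ (gfP (e a).1 (pr ((e a).2, n)) (eD a)); exists m, z.
move=> a n b m Aa Ab E.
have Gb := gfP _ (pr ((e b).2, m)) (eD b); rewrite -E in Gb.
have [e1 /prI [e2 nm]] := G5 _ _ _ _ _ (gfP _ _ (eD a)) Gb.
split=> //; move: e1 e2; rewrite /e; case: pselect => Da; case: pselect => Db /= e1 e2.
- by [].
- by case: e2.
- by case: e2.
- case: e2 => /finI; apply; rewrite inE; split => //.
Qed.

End ProdNat.

Section Independent.
Variables (K : Type) (adj : K -> K -> Prop).
Hypothesis adj_sym : forall a b, adj a b -> adj b a.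

Definition independent (B : set K) :=
  forall a b, B a -> B b -> a <> b -> ~ adj a b.

(* By Zorn's lemma there is a maximal independent set; maximality means that
   every point of K equals or is adjacent to one of its members. *)
Lemma dominating_independent_set :
  exists A, independent A /\ forall k, exists a, A a /\ (k = a \/ adj a k).
Proof.
have [A [indA Amax]] : exists A, independent A /\ forall B, A `<` B -> ~ independent B.
  apply: Zorn_bigcup => F Find Ftot a b [X FX Xa] [Y FY Yb].
  have [XY|YX] := Ftot _ _ FX FY; first by apply: (Find _ FY); [exact: XY|].
  by apply: (Find _ FX); [|exact: YX].
exists A; split=> // k; apply: contrapT => nex.
apply: (Amax (A `|` [set k])).
  split; first by move=> t At; left.
  by move=> /(_ k (or_intror erefl)) Ak; apply: nex; exists k; split=> //; left.
move=> a b [Aa|->] [Ab|->] ab.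
- exact: indA.
- by move=> h; apply: nex; exists a; split=> //; right.
- by move=> h; apply: nex; exists b; split=> //; right; apply: adj_sym.
- by [].
Qed.

(* If K is uncountable and every point has countably many neighbours, then
   K injects into an independent subset of itself: the dominating
   independent set A covers K by countable neighbourhoods, so
   |K| <= |A * nat| <= |A|. *)
Lemma independent_injection : ~ countable [set: K] ->
  (forall a, countable [set b | adj a b]) ->
  exists iota : K -> K, injective iota /\
    forall k k', k <> k' -> ~ adj (iota k) (iota k').
Proof.
move=> Kunc adj_countable.
have [A [indA Adom]] := dominating_independent_set.
pose N a := [set b | b = a \/ adj a b].
have Ncount a : countable (N a).
  rewrite (_ : N a = [set a] `|` [set b | adj a b]); last first.
    by apply/seteqP; split => b [h|h]; [left|right|left|right].
  rewrite -bigcup2inE; apply: bigcup_countable; first exact: finite_set_countable.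
  by move=> [|[|i]] /= hi; [exact: countable1|exact: adj_countable|].
have [sel selP] := choice Adom.
have Ainf : infinite_set A.
  move=> /finite_set_countable Acount; apply: Kunc.
  apply: (sub_countable (B := \bigcup_(a in A) N a)); last exact: bigcup_countable.
  by apply: subset_card_le => k _; exists (sel k); case: (selP k).
have [idx idxP] := choice (fun a => (elimT (countable_injP (N a))) (Ncount a)).
have [f [fA fI]] := infinite_prod_nat_injection Ainf.
pose iota k := f (sel k) (idx (sel k) k).
have iotaI : injective iota.
  move=> k k' /(fI _ _ _ _ (proj1 (selP k)) (proj1 (selP k'))) [e1 e2].
  apply: (idxP (sel k)); rewrite ?inE; first exact: (proj2 (selP k)).
    by rewrite e1; exact: (proj2 (selP k')).
  by rewrite e2 e1.
exists iota; split=> // k k' kk'.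
apply: indA; try exact: fA (proj1 (selP _)).
by move/iotaI.
Qed.

End Independent.

Lemma esumZl (R : realType) (I : choiceType) (A : set I) (a : I -> \bar R) (c : R) :
  0 <= c -> (forall i, (0 <= a i)%E) ->
  (\esum_(i in A) (c%:E * a i) = c%:E * \esum_(i in A) a i)%E.
Proof.
move=> c0 a0; rewrite /esum -ereal_supZl //; last first.
  by apply/set0P; exists (\sum_(x \in set0) a x)%E; exists set0 => //; exact: fsets_set0.
congr ereal_sup; apply/seteqP; split.
  move=> _ [X [finX XA] <-]; exists (\sum_(x \in X) a x)%E; first by exists X.
  by rewrite !fsbig_finite // ge0_sume_distrr.
move=> _ [_ [X [finX XA] <-] <-]; exists X => //.
by rewrite !fsbig_finite // ge0_sume_distrr.
Qed.

Lemma esum_subset (R : realType) (I : choiceType) (A B : set I) (h : I -> \bar R) :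
  A `<=` B -> (forall i, (0 <= h i)%E) -> (\esum_(i in A) h i <= \esum_(i in B) h i)%E.
Proof.
move=> AB h0; rewrite esum_mkcond [X in (_ <= X)%E]esum_mkcond.
apply: le_esum => i _; case: ifPn => iA; last by case: ifP.
by rewrite ifT // inE; apply: AB; rewrite -inE.
Qed.

Lemma eq0_small (R : realType) (x D : R) : 0 <= D ->
  (forall e, 0 < e -> `|x| <= e * D) -> x = 0.
Proof.
move=> D0 H; apply/eqP; apply: contraT => x0.
have ax : 0 < `|x| by rewrite normr_gt0.
have := H (`|x| / (D + 1)) (divr_gt0 ax (ltr_wpDl D0 ltr01)).
rewrite mulrAC ler_pdivlMr ?(ltr_wpDl D0 ltr01) // ler_pM2l //.
by rewrite gerDl ler10.
Qed.

(* A family whose level sets [|u| > 1/(n+1)] contain only uniformly bounded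
   duplicate-free lists has a countable support: the support is the union
   of these level sets, which are all finite. *)
Lemma countable_support_of_bounded_levels (R : realType) (I : choiceType) (u : I -> R) :
  (forall n : nat, exists N : R, forall s : seq I, uniq s ->
     (forall i, i \in s -> n.+1%:R^-1 < `|u i|) -> (size s)%:R <= N) ->
  countable [set i | u i != 0].
Proof.
move=> bounded.
have sub : [set i | u i != 0] `<=` \bigcup_(n in [set: nat]) [set i | n.+1%:R^-1 < `|u i|].
  move=> i /= ui; exists (Num.truncn `|u i|^-1) => //=.
  rewrite -[X in _ < X]invrK ltf_pV2 ?posrE ?invr_gt0 ?normr_gt0 //.
  exact: truncnS_gt.
apply: (sub_countable (subset_card_le sub)); apply: bigcup_countable => // n _.
apply: finite_set_countable; apply: contrapT => /infinite_set_fsetP levels_inf.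
have [N BN] := bounded n.
have [B BA B_large] := levels_inf (Num.truncn N).+1.
have := BN _ (finmap.fset_uniq B) (fun i iB => BA i iB).
by rewrite leNgt (lt_le_trans (truncnS_gt N)) // ler_nat.
Qed.

Section LpSpace.
Variables (R : realType) (p : R).
Hypothesis p_gt0 : 0 < p.

Let p_neq0 : p != 0. Proof. by rewrite gt_eqF. Qed.

Definition lp_normp (I : choiceType) (f : I -> R) : R := fine (lp_sum p f).

Lemma powRpK (x : R) : 0 <= x -> (x `^ p) `^ p^-1 = x.
Proof. by move=> x0; rewrite -powRrM mulfV // powRr1. Qed.

Lemma powRpVK (x : R) : 0 <= x -> (x `^ p^-1) `^ p = x.
Proof. by move=> x0; rewrite -powRrM mulVf // powRr1. Qed.

Lemma lp_sum_ge0 (I : choiceType) (f : I -> R) : (0 <= lp_sum p f)%E.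
Proof. by apply: esum_ge0 => i _; rewrite lee_fin powR_ge0. Qed.

Lemma lp_normp_ge0 (I : choiceType) (f : I -> R) : 0 <= lp_normp f.
Proof. exact/fine_ge0/lp_sum_ge0. Qed.

Lemma lp_sumE (I : choiceType) (f : I -> R) : in_lp p f -> lp_sum p f = (lp_normp f)%:E.
Proof. by move=> fin; rewrite /lp_normp fineK // ge0_fin_numE ?lp_sum_ge0. Qed.

Lemma lp_norm_powp (I : choiceType) (f : I -> R) : lp_norm p f `^ p = lp_normp f.
Proof. by rewrite /lp_norm powRpVK // lp_normp_ge0. Qed.

Lemma lp_norm_ge0 (I : choiceType) (f : I -> R) : 0 <= lp_norm p f.
Proof. exact: powR_ge0. Qed.

Lemma lp_norm_ltP (I : choiceType) (f : I -> R) x : 0 <= x ->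
  (lp_norm p f < x) <-> (lp_normp f < x `^ p).
Proof.
move=> x0; split => H.
  by rewrite -lp_norm_powp; apply: gt0_ltr_powR; rewrite ?nnegrE ?lp_norm_ge0.
rewrite /lp_norm -(powRpK x0); apply: gt0_ltr_powR => //;
  by rewrite ?nnegrE ?lp_normp_ge0 ?powR_ge0 // invr_gt0.
Qed.

Lemma lp_norm_geP (I : choiceType) (f : I -> R) x : 0 <= x ->
  (x <= lp_norm p f) <-> (x `^ p <= lp_normp f).
Proof.
move=> x0; split => H.
  by rewrite -lp_norm_powp; apply: ge0_ler_powR; rewrite ?nnegrE ?lp_norm_ge0 // ltW.
rewrite /lp_norm -(powRpK x0); apply: ge0_ler_powR => //;
  by rewrite ?nnegrE ?lp_normp_ge0 ?powR_ge0 // invr_ge0 ltW.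
Qed.

Lemma coord_le_lp_norm (I : choiceType) (f : I -> R) i :
  in_lp p f -> `|f i| <= lp_norm p f.
Proof.
move=> fin; apply/lp_norm_geP => //; rewrite -lee_fin -lp_sumE //.
apply: esum_ge; exists [set i]; first by split => //; exact: finite_set1.
by rewrite fsbig_set1.
Qed.

Lemma lp_sum_scale (I : choiceType) (f : I -> R) a :
  lp_sum p (fun i => a * f i) = ((`|a| `^ p)%:E * lp_sum p f)%E.
Proof.
rewrite /lp_sum -esumZl ?powR_ge0 //.
by apply: eq_esum => i _; rewrite normrM powRM // -EFinM.
Qed.

(* The quasi-triangle inequality |x + y|^p <= 2^p (|x|^p + |y|^p), valid for
   every p > 0; it suffices for all the limiting arguments below. *)
Lemma powR_quasi_triangle (x y : R) :
  `|x + y| `^ p <= 2 `^ p * (`|x| `^ p + `|y| `^ p).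
Proof.
pose m := Num.max `|x| `|y|.
have m0 : 0 <= m by rewrite le_max normr_ge0.
have xym : `|x + y| <= 2 * m.
  by rewrite (le_trans (ler_normD _ _)) // mulr2n mulrDl mul1r lerD // le_max lexx ?orbT.
rewrite (@le_trans _ _ ((2 * m) `^ p)) //.
  by apply: ge0_ler_powR; rewrite ?nnegrE ?(ltW p_gt0) ?normr_ge0 ?mulr_ge0.
rewrite powRM // ler_wpM2l ?powR_ge0 // /m.
by case: (leP `|x| `|y|) => _; [rewrite lerDr|rewrite lerDl]; rewrite powR_ge0.
Qed.

Lemma lp_sum_add (I : choiceType) (f g : I -> R) :
  (lp_sum p (fun i => (f i + g i)%R) <= (2 `^ p)%:E * (lp_sum p f + lp_sum p g))%E.
Proof.
have pos (h : I -> R) i : (0 <= (`|h i| `^ p)%:E)%E by rewrite lee_fin powR_ge0.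
rewrite /lp_sum -esumD // -esumZl ?powR_ge0 //; last by move=> i; exact: adde_ge0.
by apply: le_esum => i _; rewrite -EFinD -EFinM lee_fin powR_quasi_triangle.
Qed.

Lemma in_lp_lin (I : choiceType) (f g : I -> R) a : in_lp p f -> in_lp p g ->
  in_lp p (fun i => a * f i + g i).
Proof.
move=> ff fg; rewrite /in_lp (le_lt_trans (lp_sum_add _ _)) //.
by rewrite lp_sum_scale (lp_sumE ff) (lp_sumE fg) -EFinM ltry.
Qed.

Lemma in_lp_sub (I : choiceType) (f g : I -> R) : in_lp p f -> in_lp p g ->
  in_lp p (fun i => f i - g i).
Proof.
move=> ff fg; have := in_lp_lin (-1) fg ff.
by under eq_fun do rewrite mulN1r addrC.
Qed.

Lemma lp_normp_add (I : choiceType) (f g : I -> R) : in_lp p f -> in_lp p g ->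
  lp_normp (fun i => f i + g i) <= 2 `^ p * (lp_normp f + lp_normp g).
Proof.
move=> ff fg; have := lp_sum_add f g.
have ffg : in_lp p (fun i => f i + g i).
  by have := in_lp_lin 1 ff fg; under eq_fun do rewrite mul1r.
by rewrite (lp_sumE ffg) (lp_sumE ff) (lp_sumE fg) -EFinD -EFinM lee_fin.
Qed.

Lemma lp_sum0 (I : choiceType) : lp_sum p (fun _ : I => 0) = 0%E.
Proof. by rewrite /lp_sum esum1 // => i _; rewrite normr0 powR0. Qed.

Lemma in_lp0 (I : choiceType) : in_lp p (fun _ : I => 0).
Proof. by rewrite /in_lp lp_sum0 ltry. Qed.

Lemma in_lp_sum (I K : choiceType) (u : K -> I -> R) (s : seq K) (c : K -> R) :
  (forall a, in_lp p (u a)) -> in_lp p (fun i => \sum_(a <- s) c a * u a i).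
Proof.
move=> uf; elim: s => [|a s IH]; first by under eq_fun do rewrite big_nil; exact: in_lp0.
by under eq_fun do rewrite big_cons; exact: in_lp_lin.
Qed.


Lemma lp_sum_finite_support (I : choiceType) (F : set I) (f : I -> R) :
  finite_set F -> (forall i, ~ F i -> f i = 0) ->
  lp_sum p f = (\sum_(i \in F) (`|f i| `^ p)%:E)%E.
Proof.
move=> finF f0; rewrite /lp_sum (esumID F); last by move=> i _; rewrite lee_fin powR_ge0.
rewrite setTI esum_fset //.
rewrite [X in (_ + X)%E]esum1 ?adde0 // => i [_ /f0 ->].
by rewrite normr0 powR0.
Qed.

Lemma in_lp_unit (I : choiceType) (a : I) : in_lp p (unit_vec R a).
Proof.
rewrite /in_lp (@lp_sum_finite_support _ [set a]) ?fsbig_set1 ?ltry //.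
by move=> i /eqP/negPf; rewrite /unit_vec => ->.
Qed.

Definition fin_comb (I : choiceType) (s : seq I) (c : I -> R) : I -> R :=
  fun i => \sum_(a <- s) c a * unit_vec R a i.

Lemma fin_combE (I : choiceType) (s : seq I) (c : I -> R) i : uniq s ->
  fin_comb s c i = if i \in s then c i else 0.
Proof.
rewrite /fin_comb; elim: s => [|a s IH] /=; first by rewrite big_nil.
move=> /andP[aNs us]; rewrite big_cons IH // in_cons /unit_vec.
have [->|ia] := eqVneq i a; first by rewrite (negPf aNs) mulr1 addr0.
by rewrite mulr0 add0r.
Qed.

Lemma in_lp_fin_comb (I : choiceType) (s : seq I) (c : I -> R) : in_lp p (fin_comb s c).
Proof. exact/in_lp_sum/in_lp_unit. Qed.

Lemma lp_sum_fin_comb (I : choiceType) (s : seq I) (c : I -> R) : uniq s ->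
  lp_sum p (fin_comb s c) = (\sum_(a <- s) (`|c a| `^ p)%:E)%E.
Proof.
move=> us; rewrite (@lp_sum_finite_support _ [set` s]); last 2 first.
- exact: finite_seq.
- by move=> i /= nis; rewrite fin_combE // ifF //; apply/negP.
rewrite -(fsbig_seq _ _ us); apply: eq_big_seq => i iS.
by rewrite fin_combE // iS.
Qed.

Lemma lp_norm_sign_comb (I : choiceType) (s : seq I) (c : I -> R) : uniq s ->
  (forall a, a \in s -> `|c a| = 1) -> lp_norm p (fin_comb s c) = (size s)%:R `^ p^-1.
Proof.
move=> us c1; rewrite /lp_norm lp_sum_fin_comb //.
rewrite (eq_big_seq (fun=> 1%:E)); last by move=> a /c1 ->; rewrite powR1.
rewrite sumEFin /=; congr (_ `^ _).
by elim: (s) => [|a t IH]; rewrite ?big_nil ?big_cons ?IH //= -add1n natrD.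
Qed.

Lemma fin_sum_le_lp_normp (I : choiceType) (f : I -> R) (s : seq I) :
  in_lp p f -> uniq s -> \sum_(i <- s) `|f i| `^ p <= lp_normp f.
Proof.
move=> ff us; rewrite -lee_fin -sumEFin -lp_sumE //.
apply: esum_ge; exists [set` s]; first by split => //; exact: finite_seq.
by rewrite -(fsbig_seq _ _ us).
Qed.

Section LinearMaps.
Variables (I J : choiceType) (T : (I -> R) -> (J -> R)).
Hypothesis T_lin : lp_linear p T.

Lemma lp_linear0 : T (fun _ => 0) = (fun _ => 0).
Proof.
have := T_lin (-1) (@in_lp0 I) (@in_lp0 I).
rewrite (_ : (fun i : I => -1 * 0 + 0) = fun _ => 0); last first.
  by apply/funext => i; rewrite mulr0 addr0.
move=> E; apply/funext => j; have := congr1 (fun h => h j) E => /= ->.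
by rewrite mulN1r addNr.
Qed.

Lemma lp_linearB (f g : I -> R) : in_lp p f -> in_lp p g ->
  T (fun i => f i - g i) = (fun j => T f j - T g j).
Proof.
move=> ff fg; have := T_lin (-1) fg ff.
rewrite (_ : (fun i : I => -1 * g i + f i) = fun i => f i - g i); last first.
  by apply/funext => i; rewrite mulN1r addrC.
by move=> ->; apply/funext => j; rewrite mulN1r addrC.
Qed.

Lemma lp_linear_fin_comb (s : seq I) (c : I -> R) :
  T (fin_comb s c) = (fun j => \sum_(a <- s) c a * T (unit_vec R a) j).
Proof.
elim: s => [|a s IH].
  rewrite (_ : fin_comb [::] c = fun _ => 0); last first.
    by apply/funext => i; rewrite /fin_comb big_nil.
  by rewrite lp_linear0; apply/funext => j; rewrite big_nil.
rewrite (_ : fin_comb (a :: s) c = (fun i => c a * unit_vec R a i + fin_comb s c i)).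
  rewrite T_lin ?IH; [|exact: in_lp_unit|exact: in_lp_fin_comb].
  by apply/funext => j; rewrite big_cons.
by apply/funext => i; rewrite /fin_comb big_cons.
Qed.

End LinearMaps.

Lemma sum_const_seq (I : Type) (s : seq I) (k : R) : \sum_(i <- s) k = (size s)%:R * k.
Proof. by rewrite -sum1_size natr_sum mulr_suml; apply: eq_bigr => *; rewrite mul1r. Qed.

Lemma in_lp_support_countable (I : choiceType) (f : I -> R) :
  in_lp p f -> countable [set i | f i != 0].
Proof.
move=> ff; apply: countable_support_of_bounded_levels => n.
pose k := n.+1%:R^-1 `^ p.
have k0 : 0 < k by rewrite powR_gt0 // invr_gt0 ltr0n.
exists (lp_normp f / k) => s us sl.
rewrite ler_pdivlMr // -(sum_const_seq s k) (le_trans _ (fin_sum_le_lp_normp ff us)) //.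
rewrite big_seq [leRHS]big_seq; apply: ler_sum => i /sl fi.
by apply: ge0_ler_powR; rewrite ?nnegrE ?invr_ge0 ?ler0n ?(ltW p_gt0) // ltW.
Qed.

(* Testing S on the sign combination of m unit vectors e_a with
   |S e_a gm| > 1/(n+1) gives m/(n+1) <= C m^(1/p), which bounds m since
   1/p < 1. *)
Lemma bounded_op_row_countable (p_gt1 : 1 < p) (K L : choiceType)
    (S : (K -> R) -> (L -> R)) (gm : L) :
  bounded_op p S -> countable [set a | S (unit_vec R a) gm != 0].
Proof.
move=> [S_lin S_lp [C [C0 SC]]].
apply: countable_support_of_bounded_levels => n.
pose q := 1 - p^-1.
have q0 : 0 < q by rewrite subr_gt0 invf_lt1.
exists ((n.+1%:R * C) `^ q^-1) => s us sl.
set m := (size s)%:R.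
have [->|m0] := eqVneq m 0; first exact: powR_ge0.
have m_gt0 : 0 < m by rewrite lt0r m0 ler0n.
pose c a := Num.sg (S (unit_vec R a) gm).
have lower : m * n.+1%:R^-1 <= S (fin_comb s c) gm.
  rewrite (lp_linear_fin_comb S_lin) /m -(sum_const_seq s).
  rewrite big_seq [leRHS]big_seq; apply: ler_sum => a /sl /ltW.
  by rewrite /c -normrEsg.
have upper : S (fin_comb s c) gm <= C * m `^ p^-1.
  have c1 a : a \in s -> `|c a| = 1.
    by move=> /sl Sa; rewrite normr_sg -normr_gt0 (lt_trans _ Sa).
  rewrite /m -(lp_norm_sign_comb us c1) (le_trans (ler_norm _)) //.
  apply: le_trans (coord_le_lp_norm _ (S_lp _ _)) (SC _ _); exact: in_lp_fin_comb.
have m_split : m = m `^ p^-1 * m `^ q.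
  rewrite -powRD; last by rewrite implybE m0 orbT.
  by rewrite /q addrCA subrr addr0 powRr1 // ltW.
have mq : m `^ q <= n.+1%:R * C.
  have := le_trans lower upper; rewrite {1}m_split -mulrA (mulrC C) ler_pM2l ?powR_gt0 //.
  by rewrite ler_pdivrMr ?ltr0n // mulrC.
have -> : m = (m `^ q) `^ q^-1 by rewrite -powRrM mulfV ?gt_eqF // powRr1 // ltW.
apply: ge0_ler_powR => //; rewrite ?nnegrE ?invr_ge0 ?powR_ge0 ?(ltW q0) //.
exact: le_trans (powR_ge0 _ _) mq.
Qed.


Lemma lp_finite_truncation (I : choiceType) (g : I -> R) e : in_lp p g -> 0 < e ->
  exists s : seq I, uniq s /\ lp_normp (fun i => g i - fin_comb s g i) < e.
Proof.
move=> fg e0.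
have : ((lp_normp g - e)%:E < lp_sum p g)%E by rewrite (lp_sumE fg) lte_fin ltrBlDr ltrDl.
move=> /ereal_sup_gt [_ [X [finX _] <-] ltX].
pose s := finmap.enum_fset (fset_set X).
have us : uniq s by exact: finmap.fset_uniq.
exists s; split => //.
pose h i := g i - fin_comb s g i.
have hE i : h i = if i \in s then 0 else g i.
  by rewrite /h fin_combE //; case: ifP => _; rewrite ?subrr ?subr0.
have pos (u : I -> R) i : [set: I] i -> (0 <= (`|u i| `^ p)%:E)%E.
  by move=> _; rewrite lee_fin powR_ge0.
have Eg := esumID [set` s] _ _ (pos g).
have Eh := esumID [set` s] _ _ (pos h).
rewrite -/(lp_sum p g) in Eg; rewrite -/(lp_sum p h) in Eh.
rewrite [X in (_ = X + _)%E]esum1 ?add0e in Eh; last first.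
  by move=> i [_ /= iS]; rewrite hE ifT // normr0 powR0.
rewrite (eq_esum (b := fun i => (`|g i| `^ p)%:E)) in Eh; last first.
  by move=> i [_ /= iS]; rewrite hE ifF //; apply/negP.
rewrite setTI esum_fset in Eg; last 2 first.
- exact: finite_seq.
- by move=> i _; rewrite lee_fin powR_ge0.
rewrite -(fsbig_seq _ _ us) in Eg.
rewrite fsbig_finite // -/s in ltX.
rewrite sumEFin in ltX Eg.
rewrite (lp_sumE fg) in Eg.
have hf : in_lp p h.
  by rewrite /in_lp Eh; move: Eg; case: (esum _ _) => // r _; exact: ltry.
rewrite (lp_sumE hf) in Eh; rewrite -Eh -EFinD in Eg; move: ltX; rewrite lte_fin.
by rewrite -/h (EFin_inj Eg) ltrBlDr ltrD2l.
Qed.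

Definition disjoint_supports (K L : Type) (y : K -> L -> R) :=
  forall k k' gm, k <> k' -> y k gm = 0 \/ y k' gm = 0.

(* An uncountable family in l_p whose rows [set a | y a gm != 0] are all
   countable has an equipotent disjointly supported subfamily: overlapping
   supports define a relation with countable neighbourhoods, to which
   independent_injection applies. *)
Lemma disjoint_subfamily (K L : choiceType) (y : K -> L -> R) :
  ~ countable [set: K] -> (forall a, in_lp p (y a)) ->
  (forall gm, countable [set a | y a gm != 0]) ->
  exists iota : K -> K, injective iota /\ disjoint_supports (fun k => y (iota k)).
Proof.
move=> Kunc y_lp rows.
pose adj a b := exists gm, y a gm != 0 /\ y b gm != 0.
have adj_sym a b : adj a b -> adj b a by move=> [gm [h1 h2]]; exists gm.
have adj_countable a : countable [set b | adj a b].
  have -> : [set b | adj a b] = \bigcup_(gm in [set gm | y a gm != 0]) [set b | y b gm != 0].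
    by apply/seteqP; split => b /= [gm]; [move=> [h1 h2]|move=> h1 h2]; exists gm.
  apply: bigcup_countable; first exact: in_lp_support_countable.
  by move=> gm _; exact: rows.
have [iota [iota_inj iota_indep]] := independent_injection adj_sym Kunc adj_countable.
exists iota; split=> // k k' gm kk'.
have [|y1] := eqVneq (y (iota k) gm) 0; first by left.
have [|y2] := eqVneq (y (iota k') gm) 0; first by right.
by case: (iota_indep _ _ kk'); exists gm.
Qed.

Section DisjointImages.
Variables (K L : choiceType) (Phi : (K -> R) -> (L -> R)) (c : R).
Hypotheses (Phi_bd : bounded_op p Phi) (c_gt0 : 0 < c)
  (Phi_unit : forall k, c <= lp_norm p (Phi (unit_vec R k)))
  (Phi_disj : disjoint_supports (fun k => Phi (unit_vec R k))).

Local Notation y k := (Phi (unit_vec R k)).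

(* On the support of y k, Phi g only sees the k-th coordinate of g: this holds
   for the finite truncations of g by disjointness, and passes to the limit
   by boundedness of Phi. *)
Lemma disjoint_image_coord g k gm : in_lp p g -> y k gm != 0 ->
  Phi g gm = g k * y k gm.
Proof.
move=> fg yk; have [Phi_lin Phi_lp [M [M0 PhiM]]] := Phi_bd.
apply/eqP; rewrite -subr_eq0; apply/eqP.
apply: (@eq0_small _ _ (M + `|y k gm|)); first by rewrite addr_ge0.
move=> e e0.
have [s [us tail]] := lp_finite_truncation fg (powR_gt0 p e0).
have {}tail : lp_norm p (fun i => g i - fin_comb s g i) < e.
  exact/(lp_norm_ltP _ (ltW e0)).
have tail_lp : in_lp p (fun i => g i - fin_comb s g i).
  exact/in_lp_sub/in_lp_fin_comb.
have trunc_coord : Phi (fin_comb s g) gm = if k \in s then g k * y k gm else 0.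
  rewrite (lp_linear_fin_comb Phi_lin) /=.
  elim: (s) us => [|a t IH] /=; first by rewrite big_nil.
  move=> /andP[aNt ut]; rewrite big_cons IH // in_cons.
  have [<-|ak] := eqVneq a k; first by rewrite (negPf aNt) /= addr0.
  have [|->] := Phi_disj gm (nesym (elimN eqP ak)); first by move=> /eqP; rewrite (negPf yk).
  by rewrite mulr0 add0r.
have err : `|Phi g gm - Phi (fin_comb s g) gm| <= M * e.
  have -> : Phi g gm - Phi (fin_comb s g) gm = Phi (fun i => g i - fin_comb s g i) gm.
    by rewrite (lp_linearB Phi_lin fg (in_lp_fin_comb s g)).
  apply: (le_trans (coord_le_lp_norm _ (Phi_lp _ tail_lp))).
  by rewrite (le_trans (PhiM _ tail_lp)) // ler_wpM2l // ltW.
rewrite trunc_coord in err; case: ifP err => ks err.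
  by rewrite (le_trans err) // mulrC ler_wpM2l ?(ltW e0) // lerDl normr_ge0.
have gk : `|g k| <= e.
  have := coord_le_lp_norm k tail_lp; rewrite fin_combE // ks subr0 => gk.
  exact: le_trans gk (ltW tail).
rewrite subr0 in err; rewrite (le_trans (ler_normB _ _)) // mulrDr lerD // ?(mulrC e) //.
by rewrite normrM [leLHS]mulrC ler_wpM2l.
Qed.

(* An operator mapping unit vectors to disjointly supported vectors of norm
   at least c is bounded below by c: the p-th power of the norm of Phi g
   collects |g k|^p ||y k||^p over the disjoint supports of the y k. *)
Lemma disjoint_image_bounded_below g : in_lp p g -> c * lp_norm p g <= lp_norm p (Phi g).
Proof.
move=> fg; have [_ Phi_lp _] := Phi_bd.
pose E k := [set gm | y k gm != 0].
pose h gm := (`|Phi g gm| `^ p)%:E.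
have h0 gm : (0 <= h gm)%E by rewrite lee_fin powR_ge0.
have y_lp k : in_lp p (y k) by apply: Phi_lp; exact: in_lp_unit.
have on_support k : ((c `^ p * `|g k| `^ p)%:E <= \esum_(gm in E k) h gm)%E.
  have -> : (\esum_(gm in E k) h gm = (`|g k| `^ p)%:E * lp_sum p (y k))%E.
    rewrite /lp_sum [X in (_ = _ * X)%E](esumID (E k)); last first.
      by move=> *; rewrite lee_fin powR_ge0.
    rewrite setTI [X in (_ + X)%E]esum1 ?adde0; last first.
      by move=> gm [_ /= /negP/negPn/eqP ->]; rewrite normr0 powR0.
    rewrite -esumZl ?powR_ge0 //.
    apply: eq_esum => gm /= ygm.
    by rewrite /h (disjoint_image_coord (k := k)) // normrM powRM // EFinM.
  rewrite lp_sumE // -EFinM lee_fin mulrC ler_wpM2l ?powR_ge0 //.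
  exact/(lp_norm_geP _ (ltW c_gt0)).
have fin_sums s : uniq s ->
    (\sum_(k <- s) (c `^ p * `|g k| `^ p)%:E <= lp_sum p (Phi g))%E.
  move=> us; apply: (@le_trans _ _ (\sum_(k <- s) \esum_(gm in E k) h gm)%E).
    by apply: lee_sum => k _; exact: on_support.
  rewrite (fsbig_seq _ _ us) -esum_fset; last 2 first.
  - exact: finite_seq.
  - by move=> k _; apply: esum_ge0.
  rewrite (@esum_esum _ _ _ [set` s] E (fun _ gm => h gm)) //.
  rewrite -(esum_image _ snd h); last first.
    move=> [k gm] [k' gm']; rewrite !inE /= => -[_ yg] [_ yg'] /= eg.
    rewrite -eg in yg'; have [kk'|kk'] := pselect (k = k'); first by rewrite kk' eg.
    by case: (Phi_disj gm kk') => /eqP; rewrite ?(negPf yg) ?(negPf yg').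
  exact: esum_subset.
have sum_le : ((c `^ p)%:E * lp_sum p g <= lp_sum p (Phi g))%E.
  rewrite {1}/lp_sum -esumZl ?powR_ge0 //.
  apply: ge_ereal_sup => _ [X [finX _] <-].
  rewrite fsbig_finite //; under eq_bigr do rewrite -EFinM.
  by apply: fin_sums; exact: finmap.fset_uniq.
rewrite (lp_sumE fg) (lp_sumE (Phi_lp _ fg)) -EFinM lee_fin in sum_le.
apply/(lp_norm_geP _ (mulr_ge0 (ltW c_gt0) (lp_norm_ge0 g))).
by rewrite powRM ?(ltW c_gt0) ?lp_norm_ge0 // lp_norm_powp.
Qed.

End DisjointImages.


Lemma lp_close_trans e : 0 < e -> exists2 d, 0 < d &
  forall (I : choiceType) (f w v : I -> R), in_lp p f -> in_lp p w -> in_lp p v ->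
    lp_norm p (fun i => f i - w i) < d -> lp_norm p (fun i => w i - v i) < d ->
    lp_norm p (fun i => f i - v i) < e.
Proof.
move=> e0; pose X := e `^ p / (2 * 2 `^ p).
have X0 : 0 < X by rewrite divr_gt0 ?powR_gt0 // mulr_gt0 ?powR_gt0.
exists (X `^ p^-1); first exact: powR_gt0.
move=> I f w v ff fw fv /(lp_norm_ltP _ (powR_ge0 _ _)) fwd /(lp_norm_ltP _ (powR_ge0 _ _)) wvd.
rewrite powRpVK ?(ltW X0) // in fwd wvd.
apply/(lp_norm_ltP _ (ltW e0)).
rewrite (_ : (fun i => f i - v i) = (fun i => (f i - w i) + (w i - v i))); last first.
  by apply/funext => i; rewrite addrA subrK.
apply: le_lt_trans (lp_normp_add (in_lp_sub ff fw) (in_lp_sub fw fv)) _.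
apply: (@lt_le_trans _ _ (2 `^ p * (X + X))); first by rewrite ltr_pM2l ?powR_gt0 // ltrD.
by rewrite le_eqVlt; apply/orP; left; apply/eqP; rewrite /X; field; rewrite gt_eqF ?powR_gt0.
Qed.

Lemma closed_span_closed (K L : choiceType) (x : K -> L -> R) :
  (forall a, in_lp p (x a)) -> lp_closed p (closed_span p x).
Proof.
move=> x_lp f ff f_approx; split=> // e e0.
have [d d0 close] := lp_close_trans e0.
have [w [[w_lp w_approx] fw]] := f_approx d d0.
have [s [c wv]] := w_approx d d0.
exists s, c; apply: close fw wv => //; exact: in_lp_sum.
Qed.

Section Operators.
Variables (I J L : choiceType).

Definition lp_range (S : (I -> R) -> (J -> R)) : set (J -> R) :=
  [set h | exists f, in_lp p f /\ S f = h].

Lemma bounded_op_comp (S : (I -> R) -> (J -> R)) (T : (J -> R) -> (L -> R)) :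
  bounded_op p S -> bounded_op p T -> bounded_op p (T \o S).
Proof.
move=> [S_lin S_lp [CS [CS0 SC]]] [T_lin T_lp [CT [CT0 TC]]]; split.
- by move=> f g a ff fg /=; rewrite S_lin // T_lin //; exact: S_lp.
- by move=> f /S_lp /T_lp.
- exists (CT * CS); split; first exact: mulr_ge0.
  move=> f ff /=; rewrite (le_trans (TC _ (S_lp _ ff))) // -mulrA ler_wpM2l //.
  exact: SC.
Qed.

Lemma lp_range_subspace (S : (I -> R) -> (J -> R)) :
  lp_linear p S -> (forall f, in_lp p f -> in_lp p (S f)) -> lp_subspace p (lp_range S).
Proof.
move=> S_lin S_lp; split.
- by move=> h [f [ff <-]]; exact: S_lp.
- by exists (fun _ => 0); split; [exact: in_lp0|exact: lp_linear0].
- move=> _ _ a [f [ff <-]] [g [fg <-]].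
  by exists (fun i => a * f i + g i); split; [exact: in_lp_lin|exact: S_lin].
Qed.

Lemma bounded_below_on_range (S : (I -> R) -> (J -> R)) (T : (J -> R) -> (L -> R)) c :
  bounded_op p S -> 0 < c ->
  (forall g, in_lp p g -> c * lp_norm p g <= lp_norm p (T (S g))) ->
  bounded_below_on p T (lp_range S).
Proof.
move=> [_ _ [C [C0 SC]]] c0 TS_below.
have C1 : 0 < C + 1 by rewrite ltr_wpDl.
exists (c / (C + 1)); split; first by rewrite divr_gt0.
move=> _ [g [fg <-]]; apply: le_trans (TS_below _ fg).
rewrite -mulrA ler_wpM2l ?(ltW c0) // mulrC ler_pdivrMr // (le_trans (SC _ fg)) //.
by rewrite [leRHS]mulrC ler_wpM2r ?lp_norm_ge0 // lerDl.
Qed.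

End Operators.


Section ZeroExtension.
Variables (K K' : choiceType) (iota : K -> K').
Hypothesis iota_inj : injective iota.

Definition zero_ext (g : K -> R) : K' -> R := fun a =>
  if pselect (exists k, iota k = a) is left h then g (projT1 (cid h)) else 0.

Lemma zero_extE g k : zero_ext g (iota k) = g k.
Proof.
rewrite /zero_ext; case: pselect => [h|]; last by case; exists k.
by case: cid => k' /= /iota_inj ->.
Qed.

Lemma zero_ext_out g a : ~ (exists k, iota k = a) -> zero_ext g a = 0.
Proof. by rewrite /zero_ext; case: pselect. Qed.

Lemma zero_ext_restrict (u : K' -> R) :
  (forall a, ~ (exists k, iota k = a) -> u a = 0) -> zero_ext (u \o iota) = u.
Proof.
move=> u_out; apply/funext => a.
have [[k <-]|na] := pselect (exists k, iota k = a); first by rewrite zero_extE.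
by rewrite zero_ext_out // u_out.
Qed.

Lemma zero_ext_unit k : zero_ext (unit_vec R k) = unit_vec R (iota k).
Proof.
apply/funext => a; have [[k' <-]|na] := pselect (exists k, iota k = a).
  by rewrite zero_extE /unit_vec (inj_eq iota_inj).
rewrite zero_ext_out // /unit_vec; case: eqP => // eak; case: na; by exists k.
Qed.

Lemma lp_sum_zero_ext g : lp_sum p (zero_ext g) = lp_sum p g.
Proof.
rewrite /lp_sum (esumID (range iota)); last by move=> *; rewrite lee_fin powR_ge0.
rewrite setTI [X in (_ + X)%E]esum1 ?adde0; last first.
  move=> a [_ na]; rewrite zero_ext_out ?normr0 ?powR0 //.
  by move=> [k ek]; apply: na; exists k.
rewrite esum_image; last by move=> k k' _ _; exact: iota_inj.
by apply: eq_esum => k _; rewrite zero_extE.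
Qed.

Lemma lp_norm_zero_ext g : lp_norm p (zero_ext g) = lp_norm p g.
Proof. by rewrite /lp_norm lp_sum_zero_ext. Qed.

Lemma zero_ext_bounded : bounded_op p zero_ext.
Proof.
split.
- move=> g1 g2 a _ _; apply/funext => j.
  have [[k <-]|nj] := pselect (exists k, iota k = j); first by rewrite !zero_extE.
  by rewrite !zero_ext_out // mulr0 addr0.
- by move=> g; rewrite /in_lp lp_sum_zero_ext.
- by exists 1; split=> // g _; rewrite lp_norm_zero_ext mul1r.
Qed.

(* Composing an isomorphism J of l_p(K') onto a closed subspace with the zero
   extension gives an isomorphism of l_p(K) onto a closed subspace: a limit
   J u of points J (zero_ext g) has u vanishing off the range of iota, since
   J is bounded below. *)
Lemma iso_zero_ext (L : choiceType) (J : (K' -> R) -> (L -> R)) (V : set (L -> R)) :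
  lp_iso_onto p J V -> lp_closed p V ->
  lp_iso_onto p (J \o zero_ext) (lp_range (J \o zero_ext)) /\
  lp_closed p (lp_range (J \o zero_ext)).
Proof.
move=> [Jb [cJ [cJ0 J_below]] JV] V_closed; have [J_lin J_lp _] := Jb.
have [ext_lin ext_lp _] := zero_ext_bounded.
split.
  split=> //; first exact: bounded_op_comp zero_ext_bounded Jb.
  exists cJ; split=> // g fg /=; rewrite -lp_norm_zero_ext; exact/J_below/ext_lp.
move=> f ff f_approx.
have [u [fu Ju]] : exists u, in_lp p u /\ J u = f.
  apply/JV/V_closed => // e e0; have [_ [[g [fg <-]] close]] := f_approx e e0.
  by exists (J (zero_ext g)); split=> //; apply/JV; exists (zero_ext g); split=> //; exact: ext_lp.
have u_out a : ~ (exists k, iota k = a) -> u a = 0.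
  move=> na; apply: (@eq0_small _ _ cJ^-1); first by rewrite invr_ge0 ltW.
  move=> e e0; have [_ [[g [fg <-]] close]] := f_approx e e0.
  have d_lp := in_lp_sub fu (ext_lp _ fg).
  rewrite -Ju /= -(lp_linearB J_lin fu (ext_lp _ fg)) in close.
  have d_small : lp_norm p (fun i => u i - zero_ext g i) <= e / cJ.
    by rewrite ler_pdivlMr // mulrC; exact/ltW/(le_lt_trans (J_below _ d_lp)).
  have := coord_le_lp_norm a d_lp; rewrite zero_ext_out // subr0 => ua.
  exact: le_trans ua d_small.
exists (u \o iota); rewrite /= zero_ext_restrict //; split=> //.
by rewrite /in_lp -lp_sum_zero_ext zero_ext_restrict.
Qed.

End ZeroExtension.

End LpSpace.

Theorem mainTheorem6 (R : realType) (K L : choiceType) (p : R)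
    (x : K -> L -> R) (T : (L -> R) -> (L -> R)) :
  ~ countable [set: K] -> ~ countable [set: L] ->
  ([set: K] #<= [set: L])%card ->
  1 < p ->
  (forall a, in_lp p (x a) /\ lp_norm p (x a) = 1) ->
  equiv_unit_basis p x ->
  bounded_op p T ->
  (exists c : R, 0 < c /\ forall a, c <= lp_norm p (T (x a))) ->
  ~ in_S_lp K p T.
Proof.
move=> Kunc _ _ p_gt1 x_norm [J [J_iso Jx]] Tb [c [c0 Tx]] [_]; apply.
have p_gt0 : 0 < p := lt_trans ltr01 p_gt1.
have x_lp a : in_lp p (x a) := (x_norm a).1.
have [Jb _ _] := J_iso.
have TJb := bounded_op_comp Jb Tb.
have [iota [iota_inj Tx_disj]] : exists iota : K -> K,
    injective iota /\ disjoint_supports (fun k => T (x (iota k))).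
  apply: (disjoint_subfamily p_gt0 (y := fun a => T (x a))) => // [a|gm].
    by have [_ T_lp _] := Tb; exact: T_lp.
  under eq_set do rewrite -Jx; exact: (bounded_op_row_countable _ p_gt1 gm TJb).
have [S_iso S_closed] := iso_zero_ext p_gt0 iota_inj J_iso (closed_span_closed p_gt0 x_lp).
have [Sb _ _] := S_iso; have [S_lin S_lp _] := Sb.
have TS_unit k : T ((J \o zero_ext iota) (unit_vec R k)) = T (x (iota k)).
  by rewrite /= zero_ext_unit // Jx.
exists (lp_range p (J \o zero_ext iota)); split=> //.
- exact: lp_range_subspace.
- by exists (J \o zero_ext iota).
- have TS_unit_norm k : c <= lp_norm p ((T \o (J \o zero_ext iota)) (unit_vec R k)).
    by rewrite /= TS_unit.
  have TS_disj : disjoint_supports (fun k => (T \o (J \o zero_ext iota)) (unit_vec R k)).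
    by move=> k k' gm; rewrite /= !TS_unit; exact: Tx_disj.
  apply: (bounded_below_on_range Sb c0) => g fg.
  exact: (disjoint_image_bounded_below p_gt0 (bounded_op_comp Sb Tb) c0 TS_unit_norm TS_disj fg).
Qed.
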